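(* Let $T_1(B_1,C_1)$ and $T_2(B_2,C_2)$ be proper $(2,3)$-poles (with $|B_i|=2$, $|C_i|=3$). Form the $(2,2,1)$-pole $M=\operatorname{TT}(T_1,T_2)$ by performing the junction of $C_1$ and $C_2$ (creating three new edges), choosing one of these three new edges, subdividing it with a new vertex $v$, and attaching to $v$ a new dangling edge with semiedge $r$; the connectors of $M$ are $B_1=\{b,b'\}$, $B_2=\{c,c'\}$ and $\{r\}$. Then every colouring $\varphi$ of $M$ satisfies $\varphi(b)\ne\varphi(b')$, $\varphi(c)\ne\varphi(c')$ and $\varphi(b)+\varphi(b')+\varphi(c)+\varphi(c')+\varphi(r)=0$. Moreover, if $T_1$ and $T_2$ are both perfect, then every $5$-tuple $(a_1,a_2,d_1,d_2,e)\in\mathbb{K}^5$ with $a_1\ne a_2$, $d_1\ne d_2$ and $a_1+a_2+d_1+d_2+e=0$ equals $(\varphi(b),\varphi(b'),\varphi(c),\varphi(c'),\varphi(r))$ for some colouring $\varphi$ of $M$.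
   Context: A multipole consists of vertices and edges; each edge has two ends, each either incident with a vertex or free; a free end is a semiedge. All multipoles are cubic (every vertex is incident with exactly three edge ends; loops and parallel edges allowed). Semiedges are partitioned into connectors; a $(c_1,\dots,c_n)$-pole has $n$ connectors of sizes $c_1,\dots,c_n$. The junction of two semiedges identifies the two free ends into a single edge; the junction of two connectors of equal size performs junctions of their semiedges along an arbitrary bijection. Let $\mathbb{K}=\{(0,1),(1,0),(1,1)\}\subset\mathbb{Z}_2\times\mathbb{Z}_2$. A colouring of a multipole assigns elements of $\mathbb{K}$ to edges so that at every vertex the three incident edge ends get distinct colours (equivalently sum to $0$). The flow through a connector $S$ under $\varphi$ is $\varphi_*(S)=\sum_{e\in S}\varphi(e)\in\mathbb{Z}_2\times\mathbb{Z}_2$. A $(2,3)$-pole $T(B,C)$ is proper if $\varphi_*(B)\ne 0$ and $\varphi_*(C)\neq0$ for every colouring $\varphi$ of $T$. A proper $(2,3)$-pole $T(\{a_1,a_2\},\{b_1,b_2,b_3\})$ is perfect if the set of tuples $(\varphi(a_1),\varphi(a_2),\varphi(b_1),\varphi(b_2),\varphi(b_3))$ over all its colourings equals $\{(x_1,x_2,y_1,y_2,y_3)\in\mathbb{K}^5: x_1+x_2=y_1+y_2+y_3\ne 0\}$. *)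

From HB Require Import structures.
From mathcomp Require Import all_boot all_algebra perm.
Set Implicit Arguments. Unset Strict Implicit. Unset Printing Implicit Defensive.
Import GRing.Theory.
Local Open Scope ring_scope.

(* The group Z2 x Z2; colours are its nonzero elements (the set K). *)
Definition G := ('Z_2 * 'Z_2)%type.

(* A multipole, given by its edge ends ("darts"), its vertices, the
   incidence of each end (Some v = incident with vertex v, None = free end,
   i.e. a semiedge), and the involution [partner] sending an edge end to the
   other end of the same edge.  Edges are the orbits {x, partner x}. *)
Record multipole := Multipole {
  dart : finType;
  vert : finType;
  inc : dart -> option vert;
  partner : dart -> dart }.
Arguments inc : clear implicits.
Arguments partner : clear implicits.

Definition cubic_multipole (N : multipole) : Prop :=
  (forall x, partner N (partner N x) = x) /\
  (forall x, partner N x != x) /\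
  (forall v : vert N, #|[set x | inc N x == Some v]| = 3%N).

Definition colouring (N : multipole) (phi : dart N -> G) : Prop :=
  (forall x, phi x != 0) /\
  (forall x, phi (partner N x) = phi x) /\
  (forall x y v, inc N x = Some v -> inc N y = Some v -> x != y ->
     phi x != phi y).

(* A (2,3)-pole T(B,C): a cubic multipole whose semiedges are exactly
   a 0, a 1 (connector B) and c 0, c 1, c 2 (connector C), all distinct. *)
Definition labels23 (N : multipole) (a : 'I_2 -> dart N) (c : 'I_3 -> dart N)
  (l : 'I_2 + 'I_3) : dart N :=
  match l with inl i => a i | inr j => c j end.

Definition pole23 (N : multipole) (a : 'I_2 -> dart N) (c : 'I_3 -> dart N) :
  Prop :=
  cubic_multipole N /\
  injective (labels23 a c) /\
  (forall l, inc N (labels23 a c l) = None) /\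
  (forall x, inc N x = None -> exists l, labels23 a c l = x).

Definition proper23 (N : multipole) (a : 'I_2 -> dart N) (c : 'I_3 -> dart N) :
  Prop :=
  forall phi, colouring phi ->
    (\sum_(i < 2) phi (a i) != 0) /\ (\sum_(j < 3) phi (c j) != 0).

Definition perfect23 (N : multipole) (a : 'I_2 -> dart N) (c : 'I_3 -> dart N) :
  Prop :=
  proper23 a c /\
  forall (x : 'I_2 -> G) (y : 'I_3 -> G),
    (exists phi, colouring phi /\ (forall i, phi (a i) = x i) /\
                 (forall j, phi (c j) = y j)) <->
    [/\ (forall i, x i != 0), (forall j, y j != 0),
        \sum_(i < 2) x i = \sum_(j < 3) y j & \sum_(i < 2) x i != 0].

Definition union (N1 N2 : multipole) : multipole :=
  @Multipole (dart N1 + dart N2)%type (vert N1 + vert N2)%type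
    (fun x => match x with
              | inl x1 => omap inl (inc N1 x1)
              | inr x2 => omap inr (inc N2 x2) end)
    (fun x => match x with
              | inl x1 => inl (partner N1 x1)
              | inr x2 => inr (partner N2 x2) end).

(* Junction along a (partial) matching m of free ends: each pair {x, m x}
   of matched semiedges is identified, merging the two edges containing
   them.  The ends of the junction are the unmatched ends; the other end of
   the edge through an unmatched end x is the unique other unmatched end in
   the chain x, partner x, m (partner x), partner (m (partner x)), ... *)
Definition jdart (N : multipole) (m : dart N -> option (dart N)) :=
  sig (fun x : dart N => m x == None).

Definition jrel (N : multipole) (m : dart N -> option (dart N)) : rel (dart N) :=
  fun x y => (y == partner N x) || (m x == Some y).

Definition junction (N : multipole) (m : dart N -> option (dart N)) :
  multipole :=
  @Multipole (jdart m) (vert N)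
    (fun x => inc N (val x))
    (fun x => match [pick y : jdart m |
                      (y != x) && connect (jrel m) (val x) (val y)] with
              | Some y => y | None => x end).

(* The gadget used for subdivision: one vertex with three dangling edges.
   Darts (false, i) are at the vertex, (true, i) are free;
   (true,0) and (true,1) are joined to the chosen new edge, (true,2) is r. *)
Definition Ygadget : multipole :=
  @Multipole (bool * 'I_3)%type unit
    (fun x => if x.1 then None else Some tt)
    (fun x => (~~ x.1, x.2)).

Definition TTu (N1 N2 : multipole) : multipole := union (union N1 N2) Ygadget.

(* The matching performing the junction of C1 and C2 along the bijection
   s (c1 j is joined to c2 (s j)), except that the new edge for j = k is
   subdivided by the vertex of the gadget. *)
Definition TTmatch (N1 N2 : multipole) (c1 : 'I_3 -> dart N1)
  (c2 : 'I_3 -> dart N2) (s : {perm 'I_3}) (k : 'I_3) :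
  dart (TTu N1 N2) -> option (dart (TTu N1 N2)) :=
  fun x => match x with
  | inl (inl x1) =>
      match [pick j | c1 j == x1] with
      | Some j => if j == k then Some (inr (true, inord 0))
                  else Some (inl (inr (c2 (s j))))
      | None => None end
  | inl (inr x2) =>
      match [pick j | c2 (s j) == x2] with
      | Some j => if j == k then Some (inr (true, inord 1))
                  else Some (inl (inl (c1 j)))
      | None => None end
  | inr (b, i) =>
      if b then
        if val i == 0%N then Some (inl (inl (c1 k)))
        else if val i == 1%N then Some (inl (inr (c2 (s k))))
        else None
      else None
  end.

Definition TT (N1 N2 : multipole) (c1 : 'I_3 -> dart N1)
  (c2 : 'I_3 -> dart N2) (s : {perm 'I_3}) (k : 'I_3) : multipole :=
  junction (TTmatch c1 c2 s k).

Definition TTcol (N1 N2 : multipole) (c1 : 'I_3 -> dart N1)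
  (c2 : 'I_3 -> dart N2) (s : {perm 'I_3}) (k : 'I_3)
  (phi : dart (TT c1 c2 s k) -> G) (x : dart (TTu N1 N2)) : G :=
  oapp phi 0 (insub x).

Definition TT_b (N1 N2 : multipole) (a1 : 'I_2 -> dart N1) (i : 'I_2) :
  dart (TTu N1 N2) := inl (inl (a1 i)).
Definition TT_c (N1 N2 : multipole) (a2 : 'I_2 -> dart N2) (i : 'I_2) :
  dart (TTu N1 N2) := inl (inr (a2 i)).
Definition TT_r (N1 N2 : multipole) : dart (TTu N1 N2) := inr (true, inord 2).

From HB Require Import structures.
From mathcomp Require Import all_boot all_algebra perm.
Import GRing.Theory.
Local Open Scope ring_scope.

(* In Z2 x Z2 three nonzero elements sum to 0 iff they are distinct, so the
   three colours at a vertex sum to 0.  Summing over all edge ends, where every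
   edge is counted twice, the flows through the semiedges of a cubic multipole
   sum to 0; in particular a (2,3)-pole has equal flows through B and C.
   A colouring of TT(T1,T2) amounts to colourings of T1, T2 and of the new
   vertex v that agree on the glued edges.  The flows through B1 and B2 equal
   those through C1 and C2; on the two unsubdivided glued edges they cancel,
   leaving the three colours at v, whose sum is 0.  Properness of T1 and T2
   gives b <> b' and c <> c'.
   Conversely, with X = a1 + a2 and Y = d1 + d2 we have X + Y + e = 0, so
   X, Y, e colour v, and perfection of T1 and T2 provides colourings with
   boundary values (a1, a2; X, X, X) and (d1, d2; X, X, Y), the Y on the end
   glued to v; these glue to a colouring of TT(T1,T2). *)

Set Implicit Arguments.
Unset Strict Implicit.
Unset Printing Implicit Defensive.

Lemma G_cases (x : G) : [\/ x = (0, 0), x = (0, 1), x = (1, 0) | x = (1, 1)].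
Proof.
have Z2P (z : 'Z_2) : z = 0 \/ z = 1.
  by case: z => [[|[|n]] lt_n2]; [left | right | ]; try apply/val_inj.
by case: x => u v; case: (Z2P u) => ->; case: (Z2P v) => ->; constructor.
Qed.

Lemma addGG (x : G) : x + x = 0.
Proof. by apply/eqP; case: (G_cases x) => ->. Qed.

Lemma oppG (x : G) : - x = x.
Proof. by apply: (addrI x); rewrite subrr addGG. Qed.

Lemma addG_eq0 (x y : G) : (x + y == 0) = (x == y).
Proof. by rewrite -{1}[y]oppG subr_eq0. Qed.

Lemma addG3_eq0 (x y z : G) : x != 0 -> y != 0 -> z != 0 ->
  (x + y + z == 0) = [&& x != y, y != z & z != x].
Proof.
by case: (G_cases x) => ->; case: (G_cases y) => ->; case: (G_cases z) => ->.
Qed.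

Lemma sum_ord2 (V : nmodType) (F : 'I_2 -> V) :
  \sum_i F i = F ord0 + F (inord 1).
Proof.
rewrite big_ord_recl big_ord1; congr (_ + F _).
by apply/val_inj; rewrite /= inordK.
Qed.

Lemma sum_ord3 (V : nmodType) (F : 'I_3 -> V) :
  \sum_i F i = F (inord 0) + F (inord 1) + F (inord 2).
Proof.
rewrite !big_ord_recl big_ord0 addr0 addrA.
by congr (F _ + F _ + F _); apply/val_inj; rewrite /= inordK.
Qed.

Lemma sum_involution (T : finType) (V : nmodType) (p : T -> T) (F : T -> V) :
  involutive p -> (forall x, p x != x) -> (forall x, F (p x) = F x) ->
  \sum_x F x = (\sum_(x | (enum_rank x < enum_rank (p x))%N) F x) *+ 2.
Proof.
move=> pK p_neq Fp.
rewrite mulr2n (bigID (fun x => (enum_rank x < enum_rank (p x))%N)) /=.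
congr (_ + _); rewrite (reindex_inj (can_inj pK)) /=.
apply: eq_big => [x | x _]; last exact: Fp.
rewrite pK -leqNgt leq_eqVlt orbC.
case: ltngtP => //= /val_inj/enum_rank_inj px.
by move: (p_neq x); rewrite -px eqxx.
Qed.

Lemma sum_card3 (T : finType) (A : {set T}) (F : T -> G) :
  #|A| = 3 -> (forall x, x \in A -> F x != 0) ->
  (forall x y, x \in A -> y \in A -> x != y -> F x != F y) ->
  \sum_(x in A) F x = 0.
Proof.
move=> A3 F_neq0 F_inj; rewrite -big_enum /=.
have := enum_uniq (mem A); have := mem_enum (mem A); rewrite cardE in A3.
case: (enum A) A3 => [|x [|y [|z []]]] //= _ memA.
rewrite !inE !negb_or => /and3P[/andP[xy xz] yz _].
have [xA yA zA] : [/\ x \in A, y \in A & z \in A].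
  by rewrite -!memA !inE !eqxx ?orbT.
rewrite !big_cons big_nil addr0 addrA; apply/eqP.
by rewrite addG3_eq0 ?F_neq0 ?F_inj // eq_sym.
Qed.

Lemma sum_ord3_single (t : 'I_3) (x y : G) :
  \sum_j (if j == t then y else x) = y.
Proof.
rewrite (bigD1 t) //= eqxx (eq_bigr (fun _ => x)) => [|j /negbTE -> //].
by rewrite sumr_const cardC1 card_ord mulr2n addGG addr0.
Qed.

Lemma sum_semiedges_eq0 (N : multipole) (phi : dart N -> G) :
  cubic_multipole N -> colouring phi -> \sum_(x | inc N x == None) phi x = 0.
Proof.
move=> [pK [p_neq deg3]] [phi_neq0 [phi_p phi_v]].
have : \sum_x phi x = 0 by rewrite (sum_involution pK) // mulr2n addGG.
rewrite (bigID (fun x => inc N x == None)) /=.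
suff -> : \sum_(x | inc N x != None) phi x = 0 by rewrite addr0.
rewrite (partition_big (inc N) (fun o => o != None)) //=.
apply: big1 => [[v|]] // _.
rewrite (eq_bigl (fun x => x \in [set x | inc N x == Some v])); last first.
  by move=> x; rewrite inE; case: eqP => // ->.
apply: sum_card3 => // x y; rewrite !inE => /eqP xv /eqP yv.
exact: phi_v xv yv.
Qed.

Lemma pole23_flow (N : multipole) (a : 'I_2 -> dart N) (c : 'I_3 -> dart N)
    (phi : dart N -> G) :
  pole23 a c -> colouring phi -> \sum_i phi (a i) = \sum_j phi (c j).
Proof.
move=> [cubN [l_inj [l_free free_l]]] col.
have := sum_semiedges_eq0 cubN col.
have -> : \sum_(x | inc N x == None) phi x = \sum_l phi (labels23 a c l).
  rewrite -(big_imset _ (in2W l_inj)) /=; apply: eq_bigl => x.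
  by apply/eqP/imsetP => [/free_l[l <-] | [l _ ->]]; [exists l | exact: l_free].
by rewrite big_sumType /= => /eqP; rewrite addG_eq0 => /eqP.
Qed.

Section Pole23.
Variables (N : multipole) (a : 'I_2 -> dart N) (c : 'I_3 -> dart N).
Hypothesis poleN : pole23 a c.

Lemma pole23_inj_c : injective c.
Proof. by case: poleN => _ [l_inj _] i j /(@l_inj (inr i) (inr j)) []. Qed.

Lemma pole23_free_c j : inc N (c j) = None.
Proof. by case: poleN => _ [_ [l_free _]]; apply: (l_free (inr j)). Qed.

Lemma pole23_c_neq_a j i : c j != a i.
Proof.
by case: poleN => _ [l_inj _]; apply/eqP => /(@l_inj (inr j) (inl i)).
Qed.

End Pole23.

Lemma perfect23_colouring (N : multipole) (a : 'I_2 -> dart N)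
    (c : 'I_3 -> dart N) (x1 x2 : G) (y : 'I_3 -> G) :
  perfect23 a c -> x1 != 0 -> x2 != 0 -> x1 != x2 ->
  (forall j, y j != 0) -> \sum_j y j = x1 + x2 ->
  exists2 psi, colouring psi &
    [/\ psi (a ord0) = x1, psi (a (inord 1)) = x2 & forall j, psi (c j) = y j].
Proof.
move=> [_ perfect] x1_neq0 x2_neq0 x12 y_neq0 sum_y.
have [|psi [col [psi_a psi_c]]] := (perfect (fun i => [:: x1; x2]`_i) y).2.
  by split=> [[[|[|]] ?] | | |] //=; rewrite sum_ord2 /= inordK ?addG_eq0.
by exists psi => //; split; rewrite ?psi_a /= ?inordK.
Qed.

Lemma colouring_union (N1 N2 : multipole) (phi : dart (union N1 N2) -> G) :
  colouring phi <->
  colouring (N := N1) (phi \o inl) /\ colouring (N := N2) (phi \o inr).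
Proof.
split=> [[phi_neq0 [phi_p phi_v]] | [[neq1 [p1 v1]] [neq2 [p2 v2]]]].
  split; (split=> [x | ]; first exact: phi_neq0).
  - split=> [x | x y v xv yv xy]; first exact: (phi_p (inl x)).
    by apply: (phi_v _ _ (inl v)); rewrite /= ?xv ?yv.
  - split=> [x | x y v xv yv xy]; first exact: (phi_p (inr x)).
    by apply: (phi_v _ _ (inr v)); rewrite /= ?xv ?yv.
split; first by case.
split; first by case.
case=> x [] y v /=; case ex: (inc _ x) => [vx|] // [<-];
  case ey: (inc _ y) => [vy|] // [] // vxy.
- by rewrite (inj_eq inl_inj); apply: v1 ex _; rewrite ey vxy.
- by rewrite (inj_eq inr_inj); apply: v2 ex _; rewrite ey vxy.
Qed.

Lemma Ygadget_flow (phi : dart Ygadget -> G) :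
  colouring phi -> \sum_i phi (true, i) = 0.
Proof.
move=> [phi_neq0 [phi_p phi_v]].
rewrite sum_ord3 -!(phi_p (true, _)) /=; apply/eqP.
have neq_ij i j : i != j -> phi (false, i) != phi (false, j).
  by move=> ij; apply: (phi_v _ _ tt) => //; rewrite xpair_eqE.
by rewrite addG3_eq0 // !neq_ij // -val_eqE /= !inordK.
Qed.

Lemma colouring_Ygadget (x y z : G) :
  x != 0 -> y != 0 -> z != 0 -> x + y + z = 0 ->
  colouring (N := Ygadget) (fun v => [:: x; y; z]`_v.2).
Proof.
move=> x_neq0 y_neq0 z_neq0 /eqP; rewrite addG3_eq0 // => /and3P[xy yz zx].
split=> [[b [[|[|[|i]]] ?]] // | ]; split=> // [[[] i] [[] j]] // v _ _.
rewrite xpair_eqE /= -val_eqE; case: i j => [[|[|[|i]]] ?] [[|[|[|j]]] ?] //= _.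
all: by rewrite // eq_sym.
Qed.

Lemma pick_subpred (T : finType) (P Q : pred T) (a : T) :
  pick P = Some a -> Q a -> subpred Q P -> pick Q = Some a.
Proof.
rewrite /pick /enum_mem; elim: (Finite.enum T) => //= x s IHs.
case: ifP => Px /=; first by case=> <- Qx _; rewrite [x \in Q]Qx.
move=> Pa Qa QP; case: ifP => Qx /=; last exact: IHs.
by move: Px; rewrite [x \in P](QP _ Qx).
Qed.

Section Junction.
Variables (N : multipole) (m : dart N -> option (dart N)).
Implicit Types (phi : dart (junction m) -> G) (P : dart N -> G).

(* The colour of a surviving end reachable from z through the identifications
   of the junction; the default (1, 0) only keeps jext total and nonzero. *)
Definition jext phi (z : dart N) : G :=
  if [pick u : jdart m | connect (jrel m) z (val u)] is Some u then phi u
  else (1, 0).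

Lemma jext_neq0 phi z : colouring phi -> jext phi z != 0.
Proof. by move=> [phi_neq0 _]; rewrite /jext; case: pickP. Qed.

Lemma jext_step phi z w : jrel m z w -> jrel m w z -> jext phi z = jext phi w.
Proof.
move=> zw wz; rewrite /jext.
rewrite (eq_pick (Q := fun u : jdart m => connect (jrel m) w (val u))) //.
by move=> u; apply/idP/idP; apply: connect_trans; apply: connect1.
Qed.

Lemma jext_matched phi z w :
  m z = Some w -> m w = Some z -> jext phi z = jext phi w.
Proof. by move=> zw wz; apply: jext_step; rewrite /jrel ?zw ?wz eqxx orbT. Qed.

Lemma jext_val phi (u : jdart m) : colouring phi -> jext phi (val u) = phi u.
Proof.
move=> [_ [phi_p _]]; rewrite /jext.
set reach := fun v : jdart m => connect (jrel m) (val u) (val v).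
case E: [pick v | reach v] => [v |]; last first.
  by move: E; case: pickP => // /(_ u); rewrite /reach connect0.
have [-> // | vu] := eqVneq v u.
have reach_v : reach v by move: E; case: pickP => // w reach_w [<-].
(* The first reachable surviving end other than u is the partner of u. *)
by rewrite -(phi_p u) /= (pick_subpred E) ?vu // => w /andP[].
Qed.

Lemma colouring_jext phi :
  involutive (partner N) -> (forall x, inc N x != None -> m x = None) ->
  colouring phi -> colouring (jext phi).
Proof.
move=> pK m_inc col; have [_ [_ phi_v]] := col.
split; first by move=> z; apply: jext_neq0.
split=> [z | x y v xv yv xy].
  by symmetry; apply: jext_step; rewrite /jrel ?pK eqxx.
have mx : m x == None by rewrite m_inc ?xv.
have my : m y == None by rewrite m_inc ?yv.
rewrite -[x]/(val (Sub x mx : jdart m)) -[y]/(val (Sub y my : jdart m)).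
rewrite !jext_val //.
by apply: (phi_v _ _ v); rewrite /= ?xv ?yv -?val_eqE.
Qed.

Lemma jrel_invariant_partner P :
  (forall z w, jrel m z w -> P z = P w) ->
  forall u, P (val (partner (junction m) u)) = P (val u).
Proof.
move=> P_jrel u /=; case: pickP => [v /andP[_ /connectP[p]] | _] //.
by elim: p (val u) => [|x p IHp] z /= => [_ -> // | /andP[/P_jrel -> /IHp]].
Qed.

Lemma colouring_junction P :
  colouring P -> (forall x y, m x = Some y -> P x = P y) ->
  colouring (fun u : dart (junction m) => P (val u)).
Proof.
move=> [P_neq0 [P_p P_v]] P_m; split=> //; split=> [u | x y v xv yv xy].
  apply: jrel_invariant_partner => z w /orP[/eqP -> | /eqP /P_m //].
  by rewrite P_p.
by apply: (P_v _ _ v); rewrite ?val_eqE.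
Qed.

End Junction.

Section TT.
Variables (N1 : multipole) (a1 : 'I_2 -> dart N1) (c1 : 'I_3 -> dart N1)
  (N2 : multipole) (a2 : 'I_2 -> dart N2) (c2 : 'I_3 -> dart N2)
  (s : {perm 'I_3}) (k : 'I_3).
Hypotheses (pole1 : pole23 a1 c1) (pole2 : pole23 a2 c2).

Local Notation m := (TTmatch c1 c2 s k).
Local Notation C1 j := (inl (inl (c1 j)) : dart (TTu N1 N2)).
Local Notation C2 j := (inl (inr (c2 j)) : dart (TTu N1 N2)).
Local Notation Yend i := (inr (true, inord i) : dart (TTu N1 N2)).

Lemma TTmatch_c1 j : m (C1 j) = Some (if j == k then Yend 0 else C2 (s j)).
Proof.
rewrite /=; case: pickP => [j' /eqP/(pole23_inj_c pole1) -> | /(_ j)].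
  by case: ifP.
by rewrite eqxx.
Qed.

Lemma TTmatch_c2 j : m (C2 (s j)) = Some (if j == k then Yend 1 else C1 j).
Proof.
rewrite /=; case: pickP => [j' /eqP/(pole23_inj_c pole2)/perm_inj -> | /(_ j)].
  by case: ifP.
by rewrite eqxx.
Qed.

Lemma TTmatch_Yend0 : m (Yend 0) = Some (C1 k).
Proof. by rewrite /= inordK. Qed.

Lemma TTmatch_Yend1 : m (Yend 1) = Some (C2 (s k)).
Proof. by rewrite /= inordK. Qed.

Lemma TTmatch_inc x : inc (TTu N1 N2) x != None -> m x = None.
Proof.
case: x => [[x | x] | [[] i]] //=; case: pickP => // j /eqP <-.
  by rewrite (pole23_free_c pole1).
by rewrite (pole23_free_c pole2).
Qed.

Lemma TTmatch_b i : m (TT_b N2 a1 i) = None.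
Proof.
rewrite /=; case: pickP => // j /eqP c1a1.
by move: (pole23_c_neq_a pole1 j i); rewrite c1a1 eqxx.
Qed.

Lemma TTmatch_c i : m (TT_c N1 a2 i) = None.
Proof.
rewrite /=; case: pickP => // j /eqP c2a2.
by move: (pole23_c_neq_a pole2 (s j) i); rewrite c2a2 eqxx.
Qed.

Lemma TTmatch_r : m (TT_r N1 N2) = None.
Proof. by rewrite /= inordK. Qed.

(* The glued edge at k is subdivided by v: its halves end at the free ends 0
   and 1 of the gadget. *)
Definition TT_glued (P : dart (TTu N1 N2) -> G) : Prop :=
  [/\ forall j, j != k -> P (C1 j) = P (C2 (s j)),
      P (C1 k) = P (Yend 0) & P (C2 (s k)) = P (Yend 1)].

Lemma TT_glued_jext (phi : dart (TT c1 c2 s k) -> G) : TT_glued (jext phi).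
Proof.
split=> [j jk | |]; apply: jext_matched;
  by rewrite ?TTmatch_c1 ?TTmatch_c2 ?TTmatch_Yend0 ?TTmatch_Yend1
             ?(negbTE jk) ?eqxx.
Qed.

Lemma TT_glued_matched P : TT_glued P -> forall x y, m x = Some y -> P x = P y.
Proof.
case=> glue glue0 glue1 [[x | x] | [[] i]] y //=.
- case: pickP => // j /eqP <-.
  by case: eqVneq => [-> | jk] [<-]; [exact: glue0 | exact: glue].
- case: pickP => // j /eqP <-.
  by case: eqVneq => [-> | jk] [<-]; [exact: glue1 | rewrite glue].
have Yi n : val i = n -> inr (true, i) = Yend n :> dart (TTu N1 N2).
  by move=> <-; rewrite inord_val.
case: ifP => [/eqP/Yi -> [<-] | _]; first by rewrite glue0.
by case: ifP => [/eqP/Yi -> [<-] | _]; first by rewrite glue1.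
Qed.

Lemma TT_flow P : colouring P -> TT_glued P ->
  P (TT_b N2 a1 ord0) + P (TT_b N2 a1 (inord 1))
  + P (TT_c N1 a2 ord0) + P (TT_c N1 a2 (inord 1)) + P (TT_r N1 N2) = 0.
Proof.
move=> /colouring_union[/colouring_union[col1 col2] colY] [glue glue0 glue1].
have flow1 : P (TT_b N2 a1 ord0) + P (TT_b N2 a1 (inord 1)) = \sum_j P (C1 j).
  by rewrite -(pole23_flow pole1 col1) sum_ord2.
have flow2 : P (TT_c N1 a2 ord0) + P (TT_c N1 a2 (inord 1)) = \sum_j P (C2 j).
  by rewrite -(pole23_flow pole2 col2) sum_ord2.
rewrite (reindex_inj (@perm_inj _ s)) /= in flow2.
have regroup (b b' c c' r : G) : b + b' + c + c' + r = (b + b') + (c + c') + r.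
  by rewrite !addrA.
rewrite regroup flow1 flow2 -big_split /=.
rewrite (bigD1 k) //= big1 => [|j jk]; last by rewrite glue // addGG.
by rewrite addr0 glue0 glue1 -(Ygadget_flow colY) sum_ord3.
Qed.

Lemma TTu_partnerK : involutive (partner (TTu N1 N2)).
Proof.
have [[pK1 _] _] := pole1; have [[pK2 _] _] := pole2.
by case=> [[x | x] | [b i]] /=; rewrite ?pK1 ?pK2 ?negbK.
Qed.

Lemma TTcol_jext (phi : dart (TT c1 c2 s k) -> G) x :
  colouring phi -> m x = None -> TTcol phi x = jext phi x.
Proof.
move=> col /eqP mx; rewrite /TTcol (insubT (fun z => m z == None) mx) /=.
by rewrite -(jext_val _ col).
Qed.

Lemma TTcol_val P x :
  m x = None -> TTcol (fun u : dart (TT c1 c2 s k) => P (val u)) x = P x.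
Proof.
by move=> /eqP mx; rewrite /TTcol (insubT (fun z => m z == None) mx).
Qed.

Lemma TT_colouring_boundary (phi : dart (TT c1 c2 s k) -> G) :
  proper23 a1 c1 -> proper23 a2 c2 -> colouring phi ->
  let col := TTcol phi in
  [/\ col (TT_b N2 a1 ord0) != col (TT_b N2 a1 (inord 1)),
      col (TT_c N1 a2 ord0) != col (TT_c N1 a2 (inord 1)) &
      col (TT_b N2 a1 ord0) + col (TT_b N2 a1 (inord 1))
      + col (TT_c N1 a2 ord0) + col (TT_c N1 a2 (inord 1))
      + col (TT_r N1 N2) = 0].
Proof.
move=> proper1 proper2 col.
have colP := colouring_jext TTu_partnerK TTmatch_inc col.
have /colouring_union[/colouring_union[col1 col2] _] := colP.
have [flow1 _] := proper1 _ col1; have [flow2 _] := proper2 _ col2.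
rewrite sum_ord2 addG_eq0 in flow1; rewrite sum_ord2 addG_eq0 in flow2.
rewrite /= !TTcol_jext ?TTmatch_b ?TTmatch_c ?TTmatch_r //.
split; [exact: flow1 | exact: flow2 | ].
exact: TT_flow colP (TT_glued_jext phi).
Qed.

Lemma TT_boundary_realisable :
  perfect23 a1 c1 -> perfect23 a2 c2 ->
  forall x1 x2 y1 y2 e : G,
    x1 != 0 -> x2 != 0 -> y1 != 0 -> y2 != 0 -> e != 0 ->
    x1 != x2 -> y1 != y2 -> x1 + x2 + y1 + y2 + e = 0 ->
    exists phi : dart (TT c1 c2 s k) -> G,
      colouring phi /\
      let col := TTcol phi in
      [/\ col (TT_b N2 a1 ord0) = x1, col (TT_b N2 a1 (inord 1)) = x2,
          col (TT_c N1 a2 ord0) = y1, col (TT_c N1 a2 (inord 1)) = y2 &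
          col (TT_r N1 N2) = e].
Proof.
move=> perfect1 perfect2 x1 x2 y1 y2 e x1_neq0 x2_neq0 y1_neq0 y2_neq0 e_neq0
  x12 y12 sum_eq0.
set X := x1 + x2; set Y := y1 + y2.
have X_neq0 : X != 0 by rewrite addG_eq0.
have Y_neq0 : Y != 0 by rewrite addG_eq0.
have sum_c1 : \sum_(j < 3) X = x1 + x2 by rewrite sum_ord3 addGG add0r.
have [psi1 col1 [psi1_b0 psi1_b1 psi1_c]] :=
  perfect23_colouring perfect1 x1_neq0 x2_neq0 x12 (fun=> X_neq0) sum_c1.
pose y j := if j == s k then Y else X.
have y_neq0 j : y j != 0 by rewrite /y; case: ifP.
have [psi2 col2 [psi2_c0 psi2_c1 psi2_c]] :=
  perfect23_colouring perfect2 y1_neq0 y2_neq0 y12 y_neq0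
    (sum_ord3_single _ _ _).
have XYe : X + Y + e = 0 by rewrite /X /Y !addrA.
pose P (z : dart (TTu N1 N2)) : G := match z with
  | inl (inl x) => psi1 x
  | inl (inr x) => psi2 x
  | inr v => [:: X; Y; e]`_v.2 end.
have colP : colouring P.
  apply/colouring_union; split; first exact/colouring_union.
  exact: colouring_Ygadget X_neq0 Y_neq0 e_neq0 XYe.
have glueP : TT_glued P.
  split=> [j jk | |] /=; rewrite ?psi1_c ?psi2_c /y ?eqxx /= ?inordK //.
  by rewrite (inj_eq perm_inj) (negbTE jk).
exists (fun u => P (val u)); split.
  exact: colouring_junction colP (TT_glued_matched glueP).
rewrite /= !TTcol_val ?TTmatch_b ?TTmatch_c ?TTmatch_r //=.
by rewrite psi1_b0 psi1_b1 psi2_c0 psi2_c1 /= inordK.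
Qed.

End TT.

Theorem mainTheorem3
  (N1 : multipole) (a1 : 'I_2 -> dart N1) (c1 : 'I_3 -> dart N1)
  (N2 : multipole) (a2 : 'I_2 -> dart N2) (c2 : 'I_3 -> dart N2)
  (s : {perm 'I_3}) (k : 'I_3) :
  pole23 a1 c1 -> pole23 a2 c2 -> proper23 a1 c1 -> proper23 a2 c2 ->
  (forall phi : dart (TT c1 c2 s k) -> G, colouring phi ->
     let col := TTcol phi in
     [/\ col (TT_b N2 a1 ord0) != col (TT_b N2 a1 (inord 1)),
         col (TT_c N1 a2 ord0) != col (TT_c N1 a2 (inord 1)) &
         col (TT_b N2 a1 ord0) + col (TT_b N2 a1 (inord 1))
         + col (TT_c N1 a2 ord0) + col (TT_c N1 a2 (inord 1))
         + col (TT_r N1 N2) = 0]) /\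
  (perfect23 a1 c1 -> perfect23 a2 c2 ->
   forall x1 x2 y1 y2 e : G,
     x1 != 0 -> x2 != 0 -> y1 != 0 -> y2 != 0 -> e != 0 ->
     x1 != x2 -> y1 != y2 -> x1 + x2 + y1 + y2 + e = 0 ->
     exists phi : dart (TT c1 c2 s k) -> G,
       colouring phi /\
       let col := TTcol phi in
       [/\ col (TT_b N2 a1 ord0) = x1, col (TT_b N2 a1 (inord 1)) = x2,
           col (TT_c N1 a2 ord0) = y1, col (TT_c N1 a2 (inord 1)) = y2 &
           col (TT_r N1 N2) = e]).
Proof.
move=> pole1 pole2 proper1 proper2; split=> [phi | ].
  exact: TT_colouring_boundary.
exact: TT_boundary_realisable.
Qed.
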